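(* Let $d\ge1$, let $\Gamma$ be the free group on $d$ generators $a_1,\dots,a_d$, and let $T_{2d}$ be the Cayley graph of $\Gamma$ with respect to $\{a_1,\dots,a_d\}$ (a $2d$-regular tree), with $\Gamma$ acting by left multiplication; set $G=\mathrm{Aut}(T_{2d})$ and view $\Gamma\le G$. Let $K_d\trianglelefteq\Gamma$ be the kernel of the abelianization $\Gamma\to\mathbb Z^d$ (so $T_{2d}/K_d$ is the Cayley graph of $\mathbb Z^d$ with respect to the standard generators). Then $\mathrm{Comm}_G(K_d)\cap\mathrm{Comm}_G(\Gamma)$ is discrete in $G$.
   Context: $G$ carries the compact-open (permutation) topology. $\mathrm{Comm}_G(A)=\{g\in G: gAg^{-1}\cap A$ has finite index in both $A$ and $gAg^{-1}\}$. *)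

From mathcomp Require Import all_boot.
From mathcomp Require Import ssralg ssrint.
From Stdlib Require List.
Set Implicit Arguments. Unset Strict Implicit. Unset Printing Implicit Defensive.

(* A letter (i, b) stands for a_i if b = false and a_i^{-1} if b = true. *)
Definition letter := (nat * bool)%type.
Definition linv (x : letter) : letter := (x.1, ~~ x.2).

Fixpoint reducedb (w : seq letter) : bool :=
  match w with
  | x :: ((y :: _) as w') => (y != linv x) && reducedb w'
  | _ => true
  end.

Definition wordb (d : nat) (w : seq letter) : bool :=
  all (fun x : letter => x.1 < d) w && reducedb w.

Definition push (x : letter) (w : seq letter) : seq letter :=
  if w is y :: w' then (if y == linv x then w' else x :: w) else [:: x].

Definition mulw (u v : seq letter) : seq letter := foldr push v u.

(* elements of the free group F_d = vertices of the tree T_{2d} *)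
Definition FG (d : nat) := {w : seq letter | wordb d w}.

Definition letters (d : nat) : seq letter :=
  [seq (i, b) | i <- iota 0 d, b <- [:: false; true]].

Definition adj (d : nat) (u v : FG d) : bool :=
  has (fun x => val v == mulw (val u) [:: x]) (letters d).

(* left multiplication by gamma (the product of reduced words with letters
   < d is again such a word; insubd's default is never used) *)
Definition lmul (d : nat) (gamma : FG d) : FG d -> FG d :=
  fun v => insubd v (mulw (val gamma) (val v)).

Definition isAut (d : nat) (f : FG d -> FG d) : Prop :=
  bijective f /\ forall u v, adj u v = adj (f u) (f v).

Definition fset_ (d : nat) := (FG d -> FG d) -> Prop.

Definition Gamma (d : nat) : fset_ d := fun f => exists gamma : FG d, f =1 lmul gamma.

Definition expsum (i : nat) (w : seq letter) : int :=
  (\sum_(x <- w | x.1 == i) (if x.2 then (-1) else 1))%R.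

Definition Kd (d : nat) : fset_ d :=
  fun f => exists gamma : FG d, f =1 lmul gamma /\ forall i, expsum i (val gamma) = 0%R.

Definition conjset (d : nat) (g : FG d -> FG d) (A : fset_ d) : fset_ d :=
  fun h => isAut h /\ exists a, A a /\ h \o g =1 g \o a.

Definition setI_ (d : nat) (A B : fset_ d) : fset_ d := fun f => A f /\ B f.

Definition fin_index (d : nat) (H A : fset_ d) : Prop :=
  exists s : seq (FG d -> FG d), (forall t, List.In t s -> A t) /\
    forall a, A a -> exists t, List.In t s /\ exists h, H h /\ a =1 t \o h.

Definition Comm (d : nat) (A : fset_ d) : fset_ d :=
  fun g => isAut g /\
    fin_index (setI_ (conjset g A) A) A /\
    fin_index (setI_ (conjset g A) A) (conjset g A).

(* S is discrete in G for the permutation topology: every g in S has a basic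
   neighbourhood {h | h = g on a finite set F of vertices} meeting S only in g *)
Definition discrete_ (d : nat) (S : fset_ d) : Prop :=
  forall g, S g -> exists F : seq (FG d),
    forall h, S h -> (forall v, v \in F -> h v = g v) -> h =1 g.

Arguments Gamma d : clear implicits.
Arguments Kd d : clear implicits.

(* An element g of Comm_G(K_d) \cap Comm_G(Gamma) is an automorphism of the tree
   T_2d (the Cayley graph of F_d), and so is its inverse g'.  Commensurating
   Gamma yields P > 0 such that g \o lmul (x^P) \o g' is a left multiplication
   lmul e for every x; commensurating K_d forces e into K_d whenever x^P lies in
   K_d, so the abelianization of e depends only on that of x.  Hence the
   displacement in Z^d of g along a path labelled x^P does not depend on where
   the path starts, and similarly for g'.  Now follow the path v, v x, ...,
   v x^(P^2) for a letter x and its image under g: the displacements of g' along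
   the P-th powers of the first P labels of the image path are P vectors of
   l1-norm at most P (g' maps paths to paths) summing to P^2 e_x, so they all
   equal P e_x.  Hence the letter labelling the image of the edge (v, v x) does
   not depend on v, i.e. g (v x) = g v (g 1)^-1 g x, and g is determined by its
   values on 1 and on the letters. *)

From HB Require Import structures.
From mathcomp Require Import all_boot order ssralg ssrint ssrnum.
From Stdlib Require Import IndefiniteDescription.
Set Implicit Arguments. Unset Strict Implicit. Unset Printing Implicit Defensive.
Import Order.TTheory GRing.Theory Num.Theory.
Local Open Scope ring_scope.
Local Open Scope group_scope.

Lemma linvK : involutive linv.
Proof. by case=> i b; rewrite /linv /= negbK. Qed.

Lemma reducedb_push x w : reducedb w -> reducedb (push x w).
Proof.
case: w => [|y w] //= Rw; case: eqP => [_|/eqP ne]; last by rewrite /= ne.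
by case: w Rw => [|z w] //= /andP[].
Qed.

Lemma reducedb_mulw u v : reducedb v -> reducedb (mulw u v).
Proof. by elim: u => [|x u IH] //= Rv; apply/reducedb_push/IH. Qed.

Lemma reducedb_catl s t : reducedb (s ++ t) -> reducedb s.
Proof. by elim: s => [|x [|y s] IH] //= /andP[-> /IH]. Qed.

Definition invw (u : seq letter) : seq letter := mulw (rev (map linv u)) [::].

Section Alphabet.
Variable d : nat.
Local Notation bounded := (all (fun x : letter => x.1 < d)%N).

Lemma bounded_mulw u v : bounded u -> bounded v -> bounded (mulw u v).
Proof.
elim: u => [|x u IH] //= /andP[lt_x bu] bv; case: (mulw u v) (IH bu bv) => [|y w] /=.
  by rewrite lt_x.
by move=> /andP[lt_y bw]; case: eqP => _ //=; rewrite lt_x lt_y.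
Qed.

Lemma wordb_mulw u v : wordb d u -> wordb d v -> wordb d (mulw u v).
Proof.
by move=> /andP[bu _] /andP[bv Rv]; rewrite /wordb bounded_mulw ?reducedb_mulw.
Qed.

Lemma wordb_invw u : wordb d u -> wordb d (invw u).
Proof.
move=> /andP[bu _]; rewrite /wordb reducedb_mulw // andbT bounded_mulw //.
by rewrite all_rev all_map; apply: sub_all bu.
Qed.

End Alphabet.

Lemma push_linvK x w : reducedb w -> push x (push (linv x) w) = w.
Proof.
case: w => [|y w] /=; first by rewrite eqxx.
case: eqP => [->|_] Rw; last by rewrite /= eqxx.
rewrite linvK; case: w Rw => [|z w] //= /andP[nz _].
by rewrite linvK in nz; rewrite (negbTE nz).
Qed.

Lemma mulw_push x u v : reducedb v -> mulw (push x u) v = push x (mulw u v).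
Proof.
case: u => [|y u] //= Rv; case: eqP => [->|_] //=.
by rewrite push_linvK // reducedb_mulw.
Qed.

Lemma mulwA u v w : reducedb w -> mulw (mulw u v) w = mulw u (mulw v w).
Proof. by move=> Rw; elim: u => [|x u IH] //=; rewrite mulw_push // IH. Qed.

Lemma mulw_cat s t : reducedb (s ++ t) -> mulw s t = s ++ t.
Proof.
elim: s => [|x s IH] //= Rst; rewrite IH; last by case: (s ++ t) Rst => // ? ? /andP[].
by case: (s ++ t) Rst => [|y w] //= /andP[/negbTE->].
Qed.

Lemma mulw_invw u : reducedb u -> mulw (invw u) u = [::].
Proof.
move=> Ru; rewrite /invw mulwA {Ru}//; elim: u => [|x u IH] //=.
by rewrite rev_cons /mulw foldr_rcons /= linvK eqxx.
Qed.

HB.instance Definition _ d := Choice.copy (FG d) {w : seq letter | wordb d w}.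

Section FreeGroup.
Variable d : nat.
Local Notation G := (FG d).
Implicit Types u v w : G.

Definition fg_one : G := Sub [::] isT.
Definition fg_mul u v : G := Sub _ (wordb_mulw (valP u) (valP v)).
Definition fg_inv u : G := Sub _ (wordb_invw (valP u)).

Lemma fg_mulA : associative fg_mul.
Proof. by move=> u v w; apply: val_inj; rewrite /= mulwA //; case/andP: (valP w). Qed.

Lemma fg_mul1g : left_id fg_one fg_mul.
Proof. by move=> u; apply: val_inj. Qed.

Lemma fg_mulg1 : right_id fg_one fg_mul.
Proof. by move=> u; apply: val_inj; rewrite /= mulw_cat cats0 //; case/andP: (valP u). Qed.

Lemma fg_mulVg : left_inverse fg_one fg_inv fg_mul.
Proof. by move=> u; apply: val_inj; rewrite /= mulw_invw //; case/andP: (valP u). Qed.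

Lemma fg_mulgV : right_inverse fg_one fg_inv fg_mul.
Proof.
move=> u; rewrite -[fg_mul u _]fg_mul1g -{1}(fg_mulVg (fg_inv u)) -fg_mulA.
by rewrite (fg_mulA (fg_inv u)) fg_mulVg fg_mul1g fg_mulVg.
Qed.

HB.instance Definition _ := isGroup.Build G fg_mulA fg_mul1g fg_mulg1 fg_mulVg fg_mulgV.

Lemma lmulE w v : lmul w v = w * v.
Proof.
by apply: val_inj; rewrite /lmul insubdK //; apply: wordb_mulw (valP w) (valP v).
Qed.

Definition gen (x : letter) : G := insubd (1 : G) [:: x].

Lemma val_gen x : (x.1 < d)%N -> val (gen x) = [:: x].
Proof. by move=> lt_x; rewrite /gen insubdK // unfold_in /wordb /= lt_x. Qed.

Lemma mem_letters x : (x \in letters d) = (x.1 < d)%N.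
Proof.
case: x => i b; apply/allpairsP/idP => [[[j c] /= [+ _ [-> _]]]|lt_i].
  by rewrite mem_iota.
by exists (i, b); split; rewrite ?mem_iota //; case: (b).
Qed.

Lemma adjP u v : reflect (exists2 x, (x.1 < d)%N & v = u * gen x) (adj u v).
Proof.
apply: (iffP hasP) => [[x] | [x lt_x ->]]; last first.
  by exists x; rewrite ?mem_letters //= val_gen.
by rewrite mem_letters => lt_x /eqP Ev; exists x => //; apply: val_inj; rewrite /= val_gen.
Qed.

Lemma FG_ind (P : G -> Prop) :
  P 1 -> (forall v x, (x.1 < d)%N -> P v -> P (v * gen x)) -> forall v, P v.
Proof.
move=> P1 PM [w]; elim/last_ind: w => [|s x IH] ws.
  by rewrite (bool_irrelevance ws isT).
have /andP[] := ws; rewrite all_rcons => /andP[lt_x bs] Rsx.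
have Rs : reducedb s by apply: (@reducedb_catl s [:: x]); rewrite cats1.
have ss : wordb d s by rewrite /wordb bs.
have -> : exist _ (rcons s x) ws = (Sub s ss : G) * gen x :> G.
  by apply: val_inj; rewrite /= val_gen // mulw_cat cats1.
exact/PM/IH.
Qed.

End FreeGroup.

Definition letter_exp (x : letter) (i : nat) : int :=
  if x.1 == i then (if x.2 then -1 else 1)%R else 0%R.

Lemma letter_exp_linv x i : letter_exp (linv x) i = - letter_exp x i.
Proof. by rewrite /letter_exp /=; case: eqP; case: x.2; rewrite ?oppr0 ?opprK. Qed.

Lemma norm_letter_exp x : `|letter_exp x x.1| = 1%R.
Proof. by rewrite /letter_exp eqxx; case: x.2. Qed.

Lemma letter_exp_inj x y : letter_exp x x.1 = letter_exp y x.1 -> x = y.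
Proof.
case: x y => i b [j c]; rewrite /letter_exp /= eqxx.
by case: eqP => [<-|_]; case: b; case: c.
Qed.

Lemma expsum_cons i x w : expsum i (x :: w) = letter_exp x i + expsum i w.
Proof. by rewrite /expsum big_cons /letter_exp; case: ifP; rewrite ?add0r. Qed.

Lemma expsum_mulw i u v : expsum i (mulw u v) = expsum i u + expsum i v.
Proof.
elim: u => [|x u IH] /=; first by rewrite /expsum big_nil add0r.
rewrite expsum_cons -addrA -IH; case: (mulw u v) => [|y w] /=; first by rewrite expsum_cons.
case: eqP => [->|_]; last by rewrite expsum_cons.
by rewrite expsum_cons letter_exp_linv addrA subrr add0r.
Qed.

Section L1Norm.
Variable d : nat.
Implicit Types a : nat -> int.
Local Open Scope ring_scope.

Definition l1 a : int := \sum_(i < d) `|a i|.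

Lemma l1_letter_exp x : (x.1 < d)%N -> l1 (letter_exp x) = 1%R.
Proof.
move=> lt_x; rewrite /l1 (bigD1 (Ordinal lt_x)) //= norm_letter_exp big1 ?addr0 //.
by move=> i /eqP ne_i; rewrite /letter_exp; case: eqP => // ei; case: ne_i; apply: val_inj.
Qed.

Lemma norm_le_l1 a k : (k < d)%N -> `|a k| <= l1 a.
Proof. by move=> lt_k; rewrite /l1 (bigD1 (Ordinal lt_k)) //= lerDl sumr_ge0. Qed.

Lemma l1_le_norm a k : (k < d)%N -> l1 a <= `|a k| ->
  forall i, (i < d)%N -> i != k -> a i = 0%R.
Proof.
move=> lt_k; rewrite /l1 (bigD1 (Ordinal lt_k)) //= gerDl => le0 i lt_i ne_ik.
have S0 : \sum_(j < d | j != Ordinal lt_k) `|a j| = 0.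
  by apply/eqP; rewrite eq_le le0 sumr_ge0.
have ne : Ordinal lt_i != Ordinal lt_k by rewrite -val_eqE.
by apply/normr0_eq0/(psumr_eq0P _ S0 ne) => j _.
Qed.

Lemma l1_sum_extremal (a : nat -> nat -> int) m n x : (x.1 < d)%N ->
  (forall t, (t < m)%N -> l1 (a t) <= n%:R) ->
  (forall i, \sum_(t < m) a t i = letter_exp x i *+ (m * n)) ->
  forall t i, (t < m)%N -> (i < d)%N -> a t i = letter_exp x i *+ n.
Proof.
move=> lt_x l1a sum_a t i lt_t lt_i; set k := x.1; set s := letter_exp x k.
have ss : (s * s = 1)%R by rewrite /s /letter_exp eqxx; case: x.2; rewrite ?mulrNN mulr1.
have sa_le j : (j < m)%N -> s * a j k <= n%:R.
  move=> lt_j; apply: le_trans (ler_norm _) _; rewrite normrM norm_letter_exp mul1r.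
  exact: le_trans (norm_le_l1 _ lt_x) (l1a j lt_j).
have sum0 : \sum_(j < m) (n%:R - s * a j k) = 0%R.
  by rewrite sumrB sumr_const card_ord -mulr_sumr sum_a mulrnAr ss -mulrnA mulnC subrr.
have sat : s * a t k = n%:R.
  apply/eqP; rewrite eq_sym -subr_eq0; apply/eqP.
  by apply: (psumr_eq0P _ sum0 (i := Ordinal lt_t)) => // j _; rewrite subr_ge0 sa_le.
have akt : a t k = s *+ n by rewrite -[a t k]mul1r -ss -mulrA sat mulr_natr.
have [<-|ne_ik] := eqVneq k i; first exact: akt.
rewrite /letter_exp (negbTE ne_ik) mul0rn.
apply: (l1_le_norm lt_x) => //; last by rewrite eq_sym.
by rewrite akt normrMn norm_letter_exp l1a.
Qed.

End L1Norm.

Section Abelianization.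
Variable d : nat.
Local Notation G := (FG d).
Implicit Types u v w : G.

Definition ab u (i : nat) : int := expsum i (val u).

Definition in_Kd u : Prop := forall i, ab u i = 0%R.

Lemma abM u v i : ab (u * v) i = ab u i + ab v i.
Proof. exact: expsum_mulw. Qed.

Lemma ab1 i : ab 1 i = 0%R.
Proof. by rewrite /ab /expsum big_nil. Qed.

Lemma abV u i : ab u^-1 i = - ab u i.
Proof. by apply/eqP; rewrite -addr_eq0 -abM mulVg ab1. Qed.

Lemma abX u n i : ab (u ^+ n) i = ab u i *+ n.
Proof. by elim: n => [|n IH]; rewrite ?ab1 // expgSr abM IH mulrSr. Qed.

Lemma abJ u w i : ab (u ^ w) i = ab u i.
Proof. by rewrite conjgE !abM abV addrC addrK. Qed.

Lemma ab_prod (I : Type) (r : seq I) (F : I -> G) i :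
  ab (\big[mul/1]_(t <- r) F t) i = \sum_(t <- r) ab (F t) i.
Proof. exact: (big_morph (ab^~ i) (fun u v => abM u v i) (ab1 i)). Qed.

Lemma ab_gen x i : (x.1 < d)%N -> ab (gen d x) i = letter_exp x i.
Proof. by move=> lt_x; rewrite /ab val_gen // expsum_cons /expsum big_nil addr0. Qed.

Lemma l1_abM u v : l1 d (ab (u * v)) <= l1 d (ab u) + l1 d (ab v).
Proof. by rewrite /l1 -big_split ler_sum // => i _; rewrite abM ler_normD. Qed.

Lemma l1_ab_gen x : (x.1 < d)%N -> l1 d (ab (gen d x)) = 1%R.
Proof.
by move=> lt_x; rewrite -(l1_letter_exp lt_x); apply: eq_bigr => i _; rewrite ab_gen.
Qed.

End Abelianization.

Section Labels.
Variable d : nat.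
Local Notation G := (FG d).
Implicit Types (h : G -> G) (u v w x y z e : G).

(* For a letter x, the Cayley-graph label of the image under h of the edge from
   w to w x. *)
Definition label h w x : G := (h w)^-1 * h (w * x).

Definition intertwines h z e : Prop := forall v, h (z * v) = e * h v.

Definition liftable_in (Q : G -> Prop) h z : Prop := exists2 e, Q e & intertwines h z e.

(* x ^ w^-1 = w x w^-1 is the left multiplication carrying w to w x. *)
Definition liftable_at h w x : Prop := liftable_in (fun=> True) h (x ^ w^-1).

Definition group_pred (S : G -> Prop) : Prop :=
  [/\ S 1, forall x, S x -> S x^-1 & forall x y, S x -> S y -> S (x * y)].

Lemma mul_label h w x : h w * label h w x = h (w * x).
Proof. exact: mulVKg. Qed.

Lemma labelM h w x y : label h w (x * y) = label h w x * label h (w * x) y.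
Proof. by rewrite /label -mulgA mulVKg mulgA. Qed.

Lemma label_exp h w x n :
  label h w (x ^+ n) = \big[mul/1]_(t < n) label h (w * x ^+ t)%g x.
Proof.
elim: n => [|n IH]; first by rewrite big_ord0 /label mulg1 mulVg.
by rewrite big_ord_recr /= -IH expgSr labelM.
Qed.

Lemma label_cancel h h' w x : cancel h h' -> label h' (h w) (label h w x) = x.
Proof. by move=> hK; rewrite /label mulVKg !hK mulKg. Qed.

Lemma label_gen h w (x : letter) : {homo h : u v / adj u v} -> (x.1 < d)%N ->
  exists2 y, (y.1 < d)%N & label h w (gen d x) = gen d y.
Proof.
move=> h_adj lt_x; have /h_adj/adjP[y lt_y Ey] : adj w (w * gen d x).
  by apply/adjP; exists x.
by exists y => //; rewrite /label Ey mulKg.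
Qed.

Lemma l1_label_gen_exp h w (x : letter) n : {homo h : u v / adj u v} -> (x.1 < d)%N ->
  l1 d (ab (label h w (gen d x ^+ n))) <= n%:R.
Proof.
move=> h_adj lt_x; elim: n w => [|n IH] w.
  by rewrite /label mulg1 mulVg /l1 big1 // => i _; rewrite ab1 normr0.
have [y lt_y Ey] := label_gen (w * gen d x ^+ n) h_adj lt_x.
rewrite expgSr labelM Ey -natr1; apply: le_trans (l1_abM _ _) _.
by rewrite l1_ab_gen // lerD2r IH.
Qed.

Lemma intertwines1 h : intertwines h 1 1.
Proof. by move=> v; rewrite !mul1g. Qed.

Lemma intertwinesM h z1 e1 z2 e2 : intertwines h z1 e1 -> intertwines h z2 e2 ->
  intertwines h (z1 * z2) (e1 * e2).
Proof. by move=> H1 H2 v; rewrite -mulgA H1 H2 mulgA. Qed.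

Lemma intertwinesV h z e : intertwines h z e -> intertwines h z^-1 e^-1.
Proof. by move=> H v; apply: (mulgI e); rewrite mulVKg -H mulVKg. Qed.

Lemma intertwines_sym h h' z e : cancel h h' -> cancel h' h ->
  intertwines h z e -> intertwines h' e z.
Proof. by move=> hK h'K H v; apply: (can_inj hK); rewrite h'K H h'K. Qed.

Lemma intertwines_uniq h h' z e1 e2 : cancel h' h ->
  intertwines h z e1 -> intertwines h z e2 -> e1 = e2.
Proof. by move=> h'K H1 H2; apply: (mulIg (h (h' 1))); rewrite -H1 H2. Qed.

Lemma label_intertwines h w x e : intertwines h (x ^ w^-1) e -> label h w x = e ^ h w.
Proof. by move=> H; rewrite /label (conjgCV w x) H conjgE. Qed.

Lemma group_predX S x n : group_pred S -> S x -> S (x ^+ n).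
Proof. by case=> S1 _ SM Sx; elim: n => [|n IH] //; rewrite expgSr; apply: SM. Qed.

Lemma group_pred_liftable_in Q h : group_pred Q -> group_pred (liftable_in Q h).
Proof.
case=> Q1 QV QM; split; first by exists 1; last exact: intertwines1.
  by move=> z [e Qe He]; exists e^-1; [apply: QV | apply: intertwinesV].
move=> z1 z2 [e1 Qe1 H1] [e2 Qe2 H2].
by exists (e1 * e2); [apply: QM | apply: intertwinesM].
Qed.

Lemma liftable_at_label h h' w x : cancel h h' -> cancel h' h ->
  liftable_at h w x -> liftable_at h' (h w) (label h w x).
Proof.
move=> hK h'K [e _ He]; exists (x ^ w^-1) => //.
by rewrite (label_intertwines He) conjgK; apply: intertwines_sym He.
Qed.

Lemma liftable_at1 h w : liftable_at h w 1.
Proof. by exists 1; rewrite // conj1g; apply: intertwines1. Qed.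

Lemma liftable_atM h w x y :
  liftable_at h w x -> liftable_at h w y -> liftable_at h w (x * y).
Proof.
by move=> [e1 _ H1] [e2 _ H2]; exists (e1 * e2); rewrite // conjMg; apply: intertwinesM.
Qed.

End Labels.

Notation liftable := (liftable_in (fun=> True)).

Lemma pigeonhole_nat (X : eqType) (T : seq X) (f : nat -> X) :
  (forall j, f j \in T) -> exists i j, [/\ (i < j)%N, (j <= size T)%N & f i = f j].
Proof.
move=> fT; have : ~~ uniq (map f (iota 0 (size T).+1)).
  have sub : {subset map f (iota 0 (size T).+1) <= T} by move=> _ /mapP[j _ ->].
  by apply/negP => /uniq_leq_size/(_ sub); rewrite size_map size_iota ltnn.
case/(uniqPn (f 0%N)) => i [j [lt_ij]]; rewrite size_map size_iota ltnS => le_j.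
rewrite !(nth_map 0%N) ?size_iota ?ltnS ?(leq_trans (ltnW lt_ij)) //.
by rewrite !nth_iota ?ltnS ?(leq_trans (ltnW lt_ij)) // !add0n => Efij; exists i, j.
Qed.

Section Covers.
Variable d : nat.
Local Notation G := (FG d).
Implicit Types (h : G -> G) (x z e : G).

Definition fin_cover (Q S : G -> Prop) : Prop :=
  exists T : seq G, forall c, Q c -> exists2 t, t \in T & exists2 z, S z & c = t * z.

Lemma group_pred_True : group_pred (fun _ : G => True).
Proof. by []. Qed.

Lemma group_pred_Kd : group_pred (@in_Kd d).
Proof.
split; first exact: ab1.
  by move=> x Kx i; rewrite abV Kx oppr0.
by move=> x y Kx Ky i; rewrite abM Kx Ky addr0.
Qed.

Lemma intertwinesX h z e n : intertwines h z e -> intertwines h (z ^+ n) (e ^+ n).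
Proof.
move=> H; elim: n => [|n IH]; first exact: intertwines1.
by rewrite !expgSr; apply: intertwinesM.
Qed.

Lemma fin_cover_exp Q S : fin_cover Q S -> group_pred S ->
  exists n, forall x, (forall k, Q (x ^+ k)) -> exists2 p, (0 < p <= n)%N & S (x ^+ p).
Proof.
case=> T covT [_ SV SM]; exists (size T) => x Qx.
have [f fP] : exists f : nat -> G, forall j, f j \in T /\ exists2 z, S z & x ^+ j = f j * z.
  apply: (functional_choice (fun j (t : G) => t \in T /\ exists2 z, S z & x ^+ j = t * z)).
  by move=> j; have [t Tt Ht] := covT _ (Qx j); exists t.
have [i [j [lt_ij le_jT Efij]]] := pigeonhole_nat (fun j => (fP j).1).
have [[_ [zi Si Ei]] [_ [zj Sj Ej]]] := (fP i, fP j).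
exists (j - i)%N; first by rewrite subn_gt0 lt_ij (leq_trans (leq_subr _ _)).
have Exj : x ^+ j = x ^+ i * x ^+ (j - i) by rewrite -expgnDr subnKC // ltnW.
rewrite -[x ^+ (j - i)](mulKg (x ^+ i)) -Exj Ei Ej Efij invgM -mulgA mulKg.
exact/SM/Sj/SV.
Qed.

Lemma fin_cover_uniform_exp S : fin_cover (fun=> True) S -> group_pred S ->
  exists2 P, (0 < P)%N & forall x, S (x ^+ P).
Proof.
move=> covS gS; have [n Hn] := fin_cover_exp covS gS.
exists n`!; first exact: fact_gt0.
move=> x; have [p /andP[p_gt0 le_pn] Sxp] := Hn x (fun=> I).
have /dvdnP[k ->] : (p %| n`!)%N by rewrite dvdn_fact // p_gt0 le_pn.
by rewrite mulnC expgnA; apply: group_predX.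
Qed.

Lemma intertwines_in_Kd h h' : cancel h' h ->
  fin_cover (@in_Kd d) (liftable_in (@in_Kd d) h) ->
  forall z e, intertwines h z e -> in_Kd z -> in_Kd e.
Proof.
(* Some power z^p has a partner in K_d, which must be e^p; and Z^d is torsion-free. *)
move=> h'K covK z e He Kz i.
have [n Hn] := fin_cover_exp covK (group_pred_liftable_in h group_pred_Kd).
have [p /andP[p_gt0 _] [e' Ke' He']] := Hn z (fun k => group_predX k group_pred_Kd Kz).
apply: (pmulrnI p_gt0); rewrite mul0rn -abX.
by rewrite -(intertwines_uniq h'K He' (intertwinesX p He)) Ke'.
Qed.

End Covers.

Lemma map_f_In (T : Type) (U : eqType) (f : T -> U) s t : List.In t s -> f t \in map f s.
Proof. by elim: s => //= a s IH [->|/IH]; rewrite inE ?eqxx // => ->; rewrite orbT. Qed.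

Section Commensurator.
Variable d : nat.
Local Notation G := (FG d).
Implicit Types (f h : G -> G).

Lemma isAut_comp f h : isAut f -> isAut h -> isAut (f \o h).
Proof. by case=> bf af [bh ah]; split; [apply: bij_comp | move=> u v; rewrite ah af]. Qed.

Lemma isAut_can f h : isAut f -> cancel f h -> cancel h f -> isAut h.
Proof.
case=> _ af fK hK; split; first by exists f.
by move=> u v; rewrite -{1}(hK u) -{1}(hK v) -af.
Qed.

Lemma isAut_lmul (c : G) : isAut (lmul c).
Proof.
split; first by exists (lmul c^-1) => v; rewrite !lmulE ?mulKg ?mulVKg.
move=> u v; rewrite !lmulE; apply/adjP/adjP => -[x lt_x Ev]; exists x => //.
  by rewrite Ev mulgA.
by apply: (mulgI c); rewrite Ev mulgA.
Qed.

Variables (A : fset_ d) (Q : G -> Prop).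
Hypothesis A_lmul : forall f, A f <-> exists2 c, f =1 lmul c & Q c.
Variables (g g' : G -> G).
Hypotheses (g_aut : isAut g) (gK : cancel g g') (g'K : cancel g' g).

Lemma conjset_meet_lmul f : setI_ (conjset g A) A f ->
  exists z e, [/\ f =1 lmul e, Q z, Q e & intertwines g z e].
Proof.
case=> [[_ [a [Aa Ea]]] Af].
have [z Ez Qz] := (A_lmul a).1 Aa; have [e Ee Qe] := (A_lmul f).1 Af.
by exists z, e; split => // v; have := Ea v; rewrite /= Ez Ee !lmulE => ->.
Qed.

Lemma A_lmulP (c : G) : Q c -> A (lmul c).
Proof. by move=> Qc; apply/A_lmul; exists c. Qed.

Lemma fin_index_cover_inv :
  fin_index (setI_ (conjset g A) A) A -> fin_cover Q (liftable_in Q g').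
Proof.
case=> s [sA covs]; exists (map (fun t => t 1) s) => c Qc.
have [t [st [f [Hf Ect]]]] := covs _ (A_lmulP Qc).
have [z [e [Ef Qz Qe He]]] := conjset_meet_lmul Hf.
have [tau Et _] := (A_lmul t).1 (sA t st).
exists (t 1); first exact: map_f_In.
exists e; first by exists z; last apply: intertwines_sym He.
by rewrite (Et 1) lmulE mulg1; have := Ect 1; rewrite /= Ef Et !lmulE !mulg1.
Qed.

Lemma fin_index_cover :
  fin_index (setI_ (conjset g A) A) (conjset g A) -> fin_cover Q (liftable_in Q g).
Proof.
case=> s [sA covs]; exists (map (fun t => g' (t (g 1))) s) => c Qc.
have conj_c : conjset g A (g \o lmul c \o g').
  split; last by exists (lmul c); split; [apply: A_lmulP | move=> v /=; rewrite gK].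
  by apply/isAut_comp/(isAut_can g_aut gK g'K)/isAut_comp/isAut_lmul.
have [t [st [f [Hf Ect]]]] := covs _ conj_c.
have [z [e [Ef Qz Qe He]]] := conjset_meet_lmul Hf.
have [_ [a [Aa Ea]]] := sA t st; have [tau Ea' _] := (A_lmul a).1 Aa.
have tg v : t (g v) = g (tau * v) by have := Ea v; rewrite /= Ea' lmulE.
have Ec : c = tau * z.
  apply: (can_inj gK).
  by have := Ect (g 1); rewrite /= gK Ef !lmulE -He tg !mulg1 => ->.
exists (g' (t (g 1))); first exact: map_f_In.
by exists z; [exists e | rewrite Ec tg gK mulg1].
Qed.

Lemma Comm_covers :
  Comm A g -> fin_cover Q (liftable_in Q g) /\ fin_cover Q (liftable_in Q g').
Proof.
by case=> _ [covA covC]; split; [apply: fin_index_cover | apply: fin_index_cover_inv].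
Qed.

End Commensurator.

Section KdRigidity.
Variables (d : nat) (h : FG d -> FG d).
Local Notation G := (FG d).
Implicit Types (u v w x y z e : G).
Hypothesis h_Kd : forall z e, intertwines h z e -> in_Kd z -> in_Kd e.

Lemma ab_label_eq w v x y : liftable_at h w x -> liftable_at h v y ->
  (forall i, ab x i = ab y i) -> forall i, ab (label h w x) i = ab (label h v y) i.
Proof.
move=> [e1 _ H1] [e2 _ H2] Exy i.
rewrite (label_intertwines H1) (label_intertwines H2) !abJ.
have K : in_Kd ((x ^ w^-1)^-1 * y ^ v^-1) by move=> j; rewrite abM abV !abJ Exy addNr.
have /eqP := h_Kd (intertwinesM (intertwinesV H1) H2) K i.
by rewrite abM abV addrC subr_eq0 => /eqP.
Qed.

Variable P : nat.
Hypothesis h_liftP : forall x, liftable h (x ^+ P).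

Lemma liftable_at_expP w x : liftable_at h w (x ^+ P).
Proof. by rewrite /liftable_at conjXg; apply: h_liftP. Qed.

Lemma ab_label_expP w v x y : (forall i, ab x i = ab y i) ->
  forall i, ab (label h w (x ^+ P)) i = ab (label h v (y ^+ P)) i.
Proof.
move=> Exy; apply: ab_label_eq; try exact: liftable_at_expP.
by move=> i; rewrite !abX Exy.
Qed.

Lemma ab_label_expP_mul w x k i :
  ab (label h w (x ^+ (P * k))) i = ab (label h w (x ^+ P)) i *+ k.
Proof.
elim: k w => [|k IH] w; first by rewrite muln0 /label mulg1 mulVg ab1.
by rewrite mulnS expgnDr labelM abM IH (ab_label_expP _ w (fun _ => erefl)) mulrS.
Qed.

Lemma ab_label_prod_expP (I : Type) w (r : seq I) (y : I -> G) i :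
  ab (label h w (\big[mul/1]_(t <- r) (y t ^+ P)%g)) i =
  \sum_(t <- r) (ab (label h 1 (y t ^+ P)) i)%g.
Proof.
elim: r w => [|t r IH] w; first by rewrite !big_nil /label mulg1 mulVg ab1.
by rewrite !big_cons labelM abM IH (ab_label_expP _ 1 (fun _ => erefl)).
Qed.

End KdRigidity.

Section LetterLabels.
Variables (d : nat) (g g' : FG d -> FG d).
Hypotheses (gK : cancel g g') (g'K : cancel g' g).
Hypotheses (g_adj : {homo g : u v / adj u v}) (g'_adj : {homo g' : u v / adj u v}).
Hypothesis g_Kd : forall z e, intertwines g z e -> in_Kd z -> in_Kd e.
Hypothesis g'_Kd : forall z e, intertwines g' z e -> in_Kd z -> in_Kd e.
Variable P : nat.
Hypothesis P_gt0 : (0 < P)%N.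
Hypothesis g_liftP : forall x, liftable g (x ^+ P).
Hypothesis g'_liftP : forall x, liftable g' (x ^+ P).

Lemma ab_label_gen_expP v (x y : letter) : (x.1 < d)%N ->
  label g' v (gen d x) = gen d y ->
  forall i, (i < d)%N -> ab (label g 1 (gen d y ^+ P)) i = letter_exp x i *+ P.
Proof.
move=> lt_x Exy; set X := gen d x.
pose U t := label g' (v * X ^+ t) X.
pose a t i := ab (label g 1 (U t ^+ P)) i.
have a_l1 t : (t < P)%N -> l1 d (a t) <= P%:R.
  have [u lt_u EU] := label_gen (v * X ^+ t) g'_adj lt_x.
  by rewrite /a /U EU l1_label_gen_exp.
(* [E], the label of x^(P*P) at v, and [W], the product of the P-th powers of
   the first P labels [U t], have the same abelianization, so g displaces along
   them by the same vector: P*P times that of x along E, the sum of the [a t]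
   along W. *)
have sum_a i : \sum_(t < P) a t i = letter_exp x i *+ (P * P).
  pose W := \big[mul/1]_(t < P) (U t ^+ P)%g.
  pose E := label g' v (X ^+ (P * P)).
  have liftE : liftable_at g (g' v) E.
    by apply: liftable_at_label; rewrite // expgnA; apply: liftable_at_expP.
  have liftW : liftable_at g (g' v) W.
    apply: big_rec => [|t W' _]; first exact: liftable_at1.
    by apply/liftable_atM/liftable_at_expP.
  have abEW j : ab E j = ab W j.
    rewrite ab_label_expP_mul // ab_prod label_exp ab_prod -sumrMnl.
    by apply: eq_bigr => t _; rewrite abX.
  have := ab_label_eq g_Kd liftE liftW abEW i.
  by rewrite label_cancel // ab_label_prod_expP // abX ab_gen.
move=> i lt_i; have := l1_sum_extremal lt_x a_l1 sum_a P_gt0 lt_i.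
by rewrite /a /U expg0 mulg1 Exy.
Qed.

Lemma label_gen_const v (x : letter) : (x.1 < d)%N ->
  label g v (gen d x) = label g 1 (gen d x).
Proof.
move=> lt_x; have [y lt_y Ey] := label_gen v g_adj lt_x.
have [z lt_z Ez] := label_gen 1 g_adj lt_x.
have inv_label u c : label g u (gen d x) = gen d c ->
    label g' (g u) (gen d c) = gen d x by move <-; rewrite label_cancel.
rewrite Ey Ez; congr (gen d _); apply: letter_exp_inj; apply: (pmulrnI P_gt0).
rewrite -(ab_label_gen_expP lt_y (inv_label _ _ Ey)) //.
by rewrite -(ab_label_gen_expP lt_z (inv_label _ _ Ez)).
Qed.

End LetterLabels.

Lemma Comm_label_const d (g : FG d -> FG d) :
  setI_ (Comm (Kd d)) (Comm (Gamma d)) g ->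
  forall v (x : letter), (x.1 < d)%N -> label g v (gen d x) = label g 1 (gen d x).
Proof.
case=> CKg CGg; have g_aut := CGg.1; have [[g' gK g'K] g_adjE] := g_aut.
have g_adj : {homo g : u v / adj u v} by move=> u v; rewrite g_adjE.
have g'_adj : {homo g' : u v / adj u v} by move=> u v; rewrite (g_adjE (g' u)) !g'K.
have Gamma_lmul f : Gamma d f <-> exists2 c, f =1 lmul c & True.
  by split=> -[c Ec]; exists c.
have Kd_lmul f : Kd d f <-> exists2 c, f =1 lmul c & in_Kd c.
  by split=> [[c []] | [c]]; exists c.
have [covG covG'] := Comm_covers Gamma_lmul g_aut gK g'K CGg.
have [covK covK'] := Comm_covers Kd_lmul g_aut gK g'K CKg.
have liftG := group_pred_liftable_in g (group_pred_True d).
have liftG' := group_pred_liftable_in g' (group_pred_True d).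
have [P P_gt0 liftP] := fin_cover_uniform_exp covG liftG.
have [P' P'_gt0 liftP'] := fin_cover_uniform_exp covG' liftG'.
apply: (label_gen_const gK g'K g_adj g'_adj (intertwines_in_Kd g'K covK)
  (intertwines_in_Kd gK covK') (P := P * P')).
- by rewrite muln_gt0 P_gt0.
- by move=> x; rewrite expgnA; apply: group_predX.
- by move=> x; rewrite mulnC expgnA; apply: group_predX.
Qed.

Local Close Scope group_scope.
Local Close Scope ring_scope.

Theorem proposition5p11 (d : nat) (hd : 1 <= d) :
  discrete_ (setI_ (Comm (Kd d)) (Comm (Gamma d))).
Proof.
move=> g Sg; exists (1%g :: map (gen d) (letters d)) => h Sh agree.
have h1 : h 1%g = g 1%g by apply: agree; rewrite inE eqxx.
have h_gen x : x.1 < d -> h (gen d x) = g (gen d x).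
  by move=> lt_x; apply: agree; rewrite inE map_f ?orbT ?mem_letters.
apply: FG_ind => [//|v x lt_x hv].
rewrite -(mul_label h) -(mul_label g) !Comm_label_const //.
by rewrite /label !mul1g hv h1 h_gen.
Qed.
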